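(* Let $G$ be a gradual mechanism for a social choice function $f$, and for an agent $i$ let $\boldsymbol{Z}_i$ be a partition of the terminal histories $Z$ such that the extended family of information sets $\overline{\boldsymbol{H}}_i=\boldsymbol{H}_i\cup\boldsymbol{Z}_i$ still satisfies perfect recall. For each $\boldsymbol{h}_i\in\overline{\boldsymbol{H}}_i$ let $\Theta(\boldsymbol{h}_i)=\bigcup_{h\in\boldsymbol{h}_i}\Theta(h)$ and $\Theta_{-i}(\boldsymbol{h}_i)=\bigcup_{h\in\boldsymbol{h}_i}\Theta_{-i}(h)$. Then the information flow $\mathbb{F}_i=\{\Theta(\boldsymbol{h}_i):\boldsymbol{h}_i\in\overline{\boldsymbol{H}}_i\}$ of agent $i$ satisfies: 1. For any $\underline{\boldsymbol{h}}_i\in\boldsymbol{H}_i$, $\{\Theta(\boldsymbol{h}_i)\}_{\boldsymbol{h}_i\in\sigma(\underline{\boldsymbol{h}}_i)}$ is a partition of $\Theta(\underline{\boldsymbol{h}}_i)$. 2. For any $\underline{\boldsymbol{h}}_i\in\boldsymbol{H}_i$ and any $a_i\in A_i(\underline{\boldsymbol{h}}_i)$, $\{\Theta_{-i}(\boldsymbol{h}_i)\}_{\boldsymbol{h}_i\in\sigma_{a_i}(\underline{\boldsymbol{h}}_i)}$ is a partition of $\Theta_{-i}(\underline{\boldsymbol{h}}_i)$.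
   Context: A finite set $N$ of agents; each agent $i$ has a type space $\Theta_i$, $\Theta=\prod_{i\in N}\Theta_i$; $f:\Theta\to X$ is a social choice function. A dynamic game form with perfect recall $G=(\overline{H},\{A_i,\boldsymbol{H}_i\}_{i\in N},\mathcal{X})$: each agent $i$ has a nonempty action set $A_i$; an action profile is an element of $\prod_{i\in M}A_i$ for some nonempty $M\subseteq N$. Histories are finite sequences of action profiles; $\overline{H}$ is a finite-length tree of such sequences containing $\varnothing$ and closed under immediate predecessors; $\preceq$ is the prefix order. $Z$ = $\preceq$-maximal (terminal) histories, $H=\overline{H}\setminus Z$. An active-player correspondence $\mathbb{P}:H\twoheadrightarrow N$ is such that the immediate successors of $h\in H$ are exactly $(h,a)$, $a\in\prod_{i\in\mathbb{P}(h)}A_i(h)$, with $A_i(h)$ the actions available to $i$ at $h$. $H_i=\{h\in H:i\in\mathbb{P}(h)\}$, and $\boldsymbol{H}_i$ is a partition of $H_i$ into information sets on which $A_i(\cdot)$ is constant (written $A_i(\boldsymbol{h}_i)$). Perfect recall: for $h,\tilde h$ in the same information set, $h_i=\tilde h_i$, and for every $\underline h\preceq h$ in an information set of $i$ there is $\underline{\tilde h}\preceq\tilde h$ in the same information set as $\underline h$. Here $h_i$ denotes the sequence of actions of $i$ in $h$. $\mathcal{X}:Z\to X$. A gradual mechanism for $f$ is such a game form with: (1) $A_i=2^{\Theta_i}\setminus\{\varnothing\}$; (2) for $h\in H_i$, the sets in $A_i(h)$ are pairwise disjoint with union $\bigcap h_i$ (the intersection of $i$'s actions in $h$; $\Theta_i$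 if none); (3) for $z\in Z$ and $\theta\in\prod_i\Theta_i(z)$, $\mathcal{X}(z)=f(\theta)$. For $h\in\overline{H}$, $\Theta_j(h)$ is the last action of agent $j$ in $h$ if $j$ has acted, and $\Theta_j$ otherwise; $\Theta(h)=\prod_{j\in N}\Theta_j(h)$ and $\Theta_{-i}(h)=\prod_{j\neq i}\Theta_j(h)$. On $\overline{\boldsymbol{H}}_i$ the precedence $\underline{\boldsymbol{h}}_i\preceq\boldsymbol{h}_i$ holds if there are $\underline h\in\underline{\boldsymbol{h}}_i$, $h\in\boldsymbol{h}_i$ with $\underline h\preceq h$; this makes $\overline{\boldsymbol{H}}_i$ an arborescence. $\sigma(\underline{\boldsymbol{h}}_i)$ denotes the set of immediate successors of $\underline{\boldsymbol{h}}_i$ in $\overline{\boldsymbol{H}}_i$, and for $a_i\in A_i(\underline{\boldsymbol{h}}_i)$, $\sigma_{a_i}(\underline{\boldsymbol{h}}_i)$ is the subset of those immediate successors reached after $i$ takes action $a_i$ at $\underline{\boldsymbol{h}}_i$ (equivalently those $\boldsymbol{h}_i$ with $\Theta_i(\boldsymbol{h}_i)=a_i$, where $\Theta_i(\boldsymbol{h}_i)$ is the common value of $\Theta_i(h)$, $h\in\boldsymbol{h}_i$). *)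

From Stdlib Require List.
From mathcomp Require Import all_boot.
Unset Implicit Arguments.
Unset Strict Implicit.
Unset Printing Implicit Defensive.

Section GameForms.

Variable N : finType.
Variable Theta : N -> Type.

Definition action (i : N) := Theta i -> Prop.

(* An action profile: a partial assignment of actions, defined exactly on the
   (nonempty) set M of agents who move. *)
Definition profile := forall i : N, option (action i).
Definition profile_nonempty (p : profile) : Prop := exists i, p i <> None.

(* Histories: finite sequences of action profiles, in chronological order. *)
Definition history := seq profile.

Definition prefix (h1 h2 : history) : Prop := exists s, h2 = h1 ++ s.

Definition acts (i : N) (h : history) : seq (action i) := pmap (fun p => p i) h.

Definition ThetaAt (j : N) (h : history) : action j :=
  last (fun _ => True) (acts j h).

Definition capActs (i : N) (h : history) : action i :=
  fun t => forall a, List.In a (acts i h) -> a t.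

Definition tprofile := forall j : N, Theta j.
Definition tprofile_minus (i : N) := forall j : N, j <> i -> Theta j.

Definition ThetaH (h : history) : tprofile -> Prop :=
  fun th => forall j, ThetaAt j h (th j).
Definition ThetaH_minus (i : N) (h : history) : tprofile_minus i -> Prop :=
  fun th => forall j (hj : j <> i), ThetaAt j h (th j hj).

Definition hset := history -> Prop.
Definition hfamily := hset -> Prop.

Definition hpartition (F : hfamily) (S : hset) : Prop :=
  (forall B, F B -> exists h, B h) /\
  (forall B, F B -> forall h, B h -> S h) /\
  (forall h, S h -> exists B, F B /\ B h) /\
  (forall B1 B2, F B1 -> F B2 -> (exists h, B1 h /\ B2 h) -> B1 = B2).

Definition family_partition {T : Type} (I : hfamily) (E : hset -> T -> Prop)
    (S : T -> Prop) : Prop :=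
  (forall B, I B -> exists x, E B x) /\
  (forall B1 B2, I B1 -> I B2 -> B1 <> B2 -> forall x, E B1 x -> E B2 x -> False) /\
  (forall x, S x <-> exists B, I B /\ E B x).

Definition perfect_recall (i : N) (F : hfamily) : Prop :=
  forall B, F B -> forall h h', B h -> B h' ->
    acts i h = acts i h' /\
    (forall Bb hb, F Bb -> Bb hb -> prefix hb h ->
       exists hb', Bb hb' /\ prefix hb' h').

Record game_form (X : Type) := GameForm {
  gHbar : hset;
  gP    : history -> N -> Prop;
  gA    : history -> forall i : N, action i -> Prop;
  gInfo : N -> hfamily;
  gOut  : history -> X
}.

Arguments gHbar {X}.
Arguments gP {X}.
Arguments gA {X}.
Arguments gInfo {X}.
Arguments gOut {X}.

Variable X : Type.
Variable G : game_form X.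

Definition terminal (h : history) : Prop :=
  gHbar G h /\ forall h', gHbar G h' -> prefix h h' -> h' = h.
Definition nonterminal (h : history) : Prop := gHbar G h /\ ~ terminal h.
Definition Hi (i : N) (h : history) : Prop := nonterminal h /\ gP G h i.

Definition available_profile (h : history) (p : profile) : Prop :=
  forall i, (gP G h i -> exists a, p i = Some a /\ gA G h i a) /\
            (~ gP G h i -> p i = None).

Definition is_game_form : Prop :=
  gHbar G [::] /\
  (forall h p, gHbar G (rcons h p) -> gHbar G h) /\
  (forall h, gHbar G h -> forall p, List.In p h -> profile_nonempty p) /\
  (exists L, forall h, gHbar G h -> size h <= L) /\
  (forall h, nonterminal h -> forall p, gHbar G (rcons h p) <-> available_profile h p) /\
  (forall i, hpartition (gInfo G i) (Hi i)) /\
  (forall i B, gInfo G i B -> forall h h', B h -> B h' ->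
       forall a, gA G h i a <-> gA G h' i a) /\
  (forall i, perfect_recall i (gInfo G i)).

Definition is_gradual_mechanism (f : tprofile -> X) : Prop :=
  is_game_form /\
  (forall i h, Hi i h -> forall a, gA G h i a -> exists t, a t) /\
  (forall i h, Hi i h ->
     (forall a a', gA G h i a -> gA G h i a' -> a <> a' ->
        forall t, a t -> a' t -> False) /\
     (forall t, capActs i h t <-> exists a, gA G h i a /\ a t)) /\
  (forall z, terminal z -> forall th, ThetaH z th -> gOut G z = f th).

Definition ext_family (i : N) (Zi : hfamily) : hfamily :=
  fun B => gInfo G i B \/ Zi B.

Definition ThetaB (B : hset) : tprofile -> Prop :=
  fun th => exists h, B h /\ ThetaH h th.
Definition ThetaB_minus (i : N) (B : hset) : tprofile_minus i -> Prop :=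
  fun th => exists h, B h /\ ThetaH_minus i h th.

Definition precB (B1 B2 : hset) : Prop :=
  exists h1 h2, B1 h1 /\ B2 h2 /\ prefix h1 h2.

Definition isucc (F : hfamily) (Bu : hset) : hfamily :=
  fun B => F B /\ precB Bu B /\ B <> Bu /\
    ~ (exists C, F C /\ C <> Bu /\ C <> B /\ precB Bu C /\ precB C B).

Definition isucc_act (i : N) (F : hfamily) (Bu : hset) (a : action i) : hfamily :=
  fun B => isucc F Bu B /\
    exists hu h p, Bu hu /\ B h /\ p i = Some a /\ prefix (rcons hu p) h.

End GameForms.

Arguments profile_nonempty {N Theta}.
Arguments prefix {N Theta}.
Arguments acts {N Theta}.
Arguments ThetaAt {N Theta}.
Arguments capActs {N Theta}.
Arguments ThetaH {N Theta}.
Arguments ThetaH_minus {N Theta}.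
Arguments hpartition {N Theta}.
Arguments family_partition {N Theta T}.
Arguments perfect_recall {N Theta}.
Arguments GameForm {N Theta X}.
Arguments gHbar {N Theta X}.
Arguments gP {N Theta X}.
Arguments gA {N Theta X}.
Arguments gInfo {N Theta X}.
Arguments gOut {N Theta X}.
Arguments terminal {N Theta X}.
Arguments nonterminal {N Theta X}.
Arguments Hi {N Theta X}.
Arguments available_profile {N Theta X}.
Arguments is_game_form {N Theta X}.
Arguments is_gradual_mechanism {N Theta X}.
Arguments ext_family {N Theta X}.
Arguments ThetaB {N Theta}.
Arguments ThetaB_minus {N Theta}.
Arguments precB {N Theta}.
Arguments isucc {N Theta}.
Arguments isucc_act {N Theta}.
Arguments action {N} Theta i.
Arguments profile {N} Theta.
Arguments history {N} Theta.
Arguments hset {N} Theta.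
Arguments hfamily {N} Theta.
Arguments tprofile {N} Theta.
Arguments tprofile_minus {N} Theta i.
Arguments game_form {N} Theta X.

(* The available actions of an agent partition what she has reported so far,
   so at a node consistent with a type profile th the next action profile
   consistent with th is unique: the histories consistent with th form a
   chain, the play of th.  Two distinct immediate successors of an information
   set cannot contain comparable nodes, for the earlier one would lie strictly
   between; this gives disjointness.  Following the play of th from a node of
   Bu to the next node of agent i, or to the end of the game, reaches an
   immediate successor of Bu; this gives the covering.  In an immediate
   successor reached through the action a, the last report of agent i is a, so
   there any profile of the other agents is completed by any type of i in a,
   which reduces the second partition to the first argument. *)

From Stdlib Require Import Classical ProofIrrelevance FunctionalExtensionality.
From Stdlib Require Import IndefiniteDescription.
From Stdlib Require ChoiceFacts.
From Pilot Require Import Defs.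
From mathcomp Require Import all_boot zify.

Set Implicit Arguments.
Unset Strict Implicit.

Section Histories.
Context {N : finType} {Theta : N -> Type}.
Implicit Types (h g c : history Theta) (p q : profile Theta).

Lemma prefix_refl h : Defs.prefix h h.
Proof. by exists [::]; rewrite cats0. Qed.

Lemma prefix_trans h1 h2 h3 :
  Defs.prefix h1 h2 -> Defs.prefix h2 h3 -> Defs.prefix h1 h3.
Proof. by move=> [s ->] [t ->]; exists (s ++ t); rewrite catA. Qed.

Lemma prefix_rcons h p : Defs.prefix h (rcons h p).
Proof. by exists [:: p]; rewrite cats1. Qed.

Lemma size_prefix h h' : Defs.prefix h h' -> size h <= size h'.
Proof. by move=> [s ->]; rewrite size_cat leq_addr. Qed.

Lemma prefix_antisym h h' : Defs.prefix h h' -> Defs.prefix h' h -> h = h'.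
Proof.
move=> [s ->] /size_prefix; rewrite size_cat.
by case: s => [|p s] /=; [rewrite cats0 | lia].
Qed.

Lemma prefix_total h1 h2 h :
  Defs.prefix h1 h -> Defs.prefix h2 h -> Defs.prefix h1 h2 \/ Defs.prefix h2 h1.
Proof.
move=> [s ->]; elim: h1 h2 => [|p h1 IH] h2 [t E]; first by left; exists h2.
case: h2 E => [|q h2] E; first by right; exists (p :: h1).
case: E => -> E; have [[u ->]|[u ->]] := IH h2 (ex_intro _ t E).
- by left; exists u.
- by right; exists u.
Qed.

Lemma prefix_rcons_inv c h p :
  Defs.prefix c (rcons h p) -> c = rcons h p \/ Defs.prefix c h.
Proof.
move=> [t]; case/lastP: t => [|t x]; first by rewrite cats0; left.
by rewrite -rcons_cat => /rcons_inj [-> _]; right; exists t.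
Qed.

Lemma strict_prefix_rcons h h' :
  Defs.prefix h h' -> h <> h' -> exists q, Defs.prefix (rcons h q) h'.
Proof. by move=> [[|q s] ->]; [rewrite cats0 | exists q, s; rewrite cat_rcons]. Qed.

Lemma rcons_prefix_neq h q h' : Defs.prefix (rcons h q) h' -> h <> h'.
Proof. by move=> /size_prefix + E; rewrite -E size_rcons ltnn. Qed.

Lemma acts_cat j h h' : acts j (h ++ h') = acts j h ++ acts j h'.
Proof. exact: pmap_cat. Qed.

Lemma acts_rcons j h p :
  acts j (rcons h p) = if p j is Some a then rcons (acts j h) a else acts j h.
Proof.
by rewrite -cats1 acts_cat /acts /=; case: (p j) => [a|]; rewrite ?cats1 ?cats0.
Qed.

Lemma size_acts_prefix j h h' :
  Defs.prefix h h' -> size (acts j h) <= size (acts j h').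
Proof. by move=> [s ->]; rewrite acts_cat size_cat leq_addr. Qed.

Lemma ThetaAt_rcons j h p :
  ThetaAt j (rcons h p) = if p j is Some a then a else ThetaAt j h.
Proof. by rewrite /ThetaAt acts_rcons; case: (p j) => [a|]; rewrite ?last_rcons. Qed.

Lemma tprofile_extend k (th' : tprofile_minus Theta k) (t : Theta k) :
  exists th : tprofile Theta, th k = t /\ forall j (hj : j <> k), th j = th' j hj.
Proof.
exists (fun j => match j =P k with
                 | ReflectT e => eq_rect_r Theta t e
                 | ReflectF ne => th' j ne end).
split.
- by case: (k =P k) => [e|//]; rewrite (eq_irrelevance e (erefl k)).
- by move=> j hj; case: (j =P k) => [//|ne]; rewrite (proof_irrelevance _ ne hj).
Qed.

Lemma ThetaH_glue k h (th' : tprofile_minus Theta k) (th : tprofile Theta) :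
  (forall j (hj : j <> k), th j = th' j hj) ->
  ThetaH_minus k h th' -> ThetaAt k h (th k) -> ThetaH h th.
Proof.
move=> Eth Hth' Hk j; case: (classic (j = k)) => [->|ne] //.
by rewrite (Eth j ne); exact: Hth'.
Qed.

End Histories.

Section GameTree.
Context {N : finType} {Theta : N -> Type} {X : Type} (G : game_form Theta X).
Implicit Types (h g c : history Theta) (p q : profile Theta).

Hypothesis tree_rcons_closed : forall h p, gHbar G (rcons h p) -> gHbar G h.
Hypothesis tree_successors : forall h, nonterminal G h ->
  forall p, gHbar G (rcons h p) <-> available_profile G h p.

Lemma tree_prefix_closed h h' : gHbar G h' -> Defs.prefix h h' -> gHbar G h.
Proof.
move=> + [s Eh']; rewrite {}Eh'.
elim/last_ind: s => [|s q IH]; first by rewrite cats0.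
by rewrite -rcons_cat => /tree_rcons_closed.
Qed.

Lemma tree_rcons h p :
  gHbar G (rcons h p) -> nonterminal G h /\ available_profile G h p.
Proof.
move=> Thp; have Th := tree_rcons_closed Thp.
have NT : nonterminal G h.
  split=> // -[_ Tmax]; have := Tmax _ Thp (prefix_rcons h p).
  by move=> /(f_equal size); rewrite size_rcons; lia.
by split=> //; apply/(tree_successors NT).
Qed.

Lemma available_Some h p j a :
  available_profile G h p -> p j = Some a -> gP G h j /\ gA G h j a.
Proof.
move=> Hav E; have [Hact Hidle] := Hav j.
case: (classic (gP G h j)) => Hg; last by rewrite Hidle in E.
by have [a' [E' Ha']] := Hact Hg; move: E'; rewrite E => -[->].
Qed.

Lemma Hi_acts_lt i c h : Hi G i c -> gHbar G h -> Defs.prefix c h -> c <> h ->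
  size (acts i c) < size (acts i h).
Proof.
move=> [NT Hg] Th Pch Nch; have [q Pq] := strict_prefix_rcons Pch Nch.
have [_ Hav] := tree_rcons (tree_prefix_closed Th Pq).
have [b [Eb _]] := (Hav i).1 Hg.
apply: leq_trans (size_acts_prefix i Pq).
by rewrite acts_rcons Eb size_rcons.
Qed.

Definition Hi_or_terminal i h := Hi G i h \/ terminal G h.

Definition idle i g h :=
  forall c, Defs.prefix g c -> Defs.prefix c h -> c <> h -> ~ Hi G i c.

Lemma idle_refl i h : idle i h h.
Proof. by move=> c P1 P2 Nc; case: Nc; apply: prefix_antisym. Qed.

Lemma idle_rcons i g q h : ~ Hi G i g -> Defs.prefix (rcons g q) h ->
  idle i (rcons g q) h -> idle i g h.
Proof.
move=> Hg Pqh Idle c Pgc Pch Nch.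
have [Pqc|/prefix_rcons_inv [Ec|Pcg]] := prefix_total Pqh Pch.
- exact: Idle Pqc Pch Nch.
- by rewrite Ec in Pch Nch *; exact: Idle (prefix_refl _) Pch Nch.
- by rewrite (prefix_antisym Pcg Pgc).
Qed.

Lemma idle_acts i g h :
  gHbar G h -> Defs.prefix g h -> idle i g h -> acts i h = acts i g.
Proof.
elim/last_ind: h => [|h q IH] Th Pg Idle.
  by move: Pg => /size_prefix; rewrite leqn0 => /nilP ->.
have [Eg|Pgh] := prefix_rcons_inv Pg; first by rewrite Eg.
have [NT Hav] := tree_rcons Th.
have Hh : ~ Hi G i h.
  exact: Idle Pgh (prefix_rcons h q) (rcons_prefix_neq (prefix_refl _)).
have Eq : q i = None by apply: (Hav i).2 => Hg; apply: Hh.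
rewrite acts_rcons Eq; apply: IH (tree_rcons_closed Th) Pgh _.
move=> c Pgc Pch Nch; apply: Idle Pgc (prefix_trans Pch (prefix_rcons h q)) _.
by move=> Ec; move: Pch; rewrite Ec => /size_prefix; rewrite size_rcons ltnn.
Qed.

Section Mechanism.
Hypothesis actions_nonempty :
  forall i h, Hi G i h -> forall a, gA G h i a -> exists t, a t.
Hypothesis actions_disjoint : forall i h, Hi G i h -> forall a a',
  gA G h i a -> gA G h i a' -> a <> a' -> forall t, a t -> a' t -> False.
Hypothesis actions_cover : forall i h, Hi G i h ->
  forall t, capActs i h t <-> exists a, gA G h i a /\ a t.

Lemma ThetaAt_capActs j h t : gHbar G h -> ThetaAt j h t <-> capActs j h t.
Proof.
elim/last_ind: h => [|h p IH] Th; first by split=> // _ a [].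
have [NT Hav] := tree_rcons Th.
rewrite ThetaAt_rcons /capActs acts_rcons.
case E: (p j) => [b|]; last exact: IH (tree_rcons_closed Th).
have [Hg Gb] := available_Some Hav E.
split=> [Hb a|]; last by apply; rewrite -cats1 List.in_app_iff; right; left.
rewrite -cats1 List.in_app_iff => -[Ha|[<-|//]] //.
by apply: (proj2 (actions_cover (conj NT Hg) t)) Ha; exists b.
Qed.

Lemma ThetaAt_prefix j h h' t :
  gHbar G h' -> Defs.prefix h h' -> ThetaAt j h' t -> ThetaAt j h t.
Proof.
move=> Th' Phh' /(ThetaAt_capActs t Th') Hcap.
apply/(ThetaAt_capActs t (tree_prefix_closed Th' Phh')) => a Ha.
by case: Phh' Hcap => s -> Hcap; apply: Hcap; rewrite acts_cat List.in_app_iff; left.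
Qed.

Lemma ThetaH_prefix h h' th :
  gHbar G h' -> Defs.prefix h h' -> ThetaH h' th -> ThetaH h th.
Proof. by move=> Th' Phh' Hth j; exact: ThetaAt_prefix Th' Phh' (Hth j). Qed.

Lemma ThetaAt_actions j h t :
  Hi G j h -> ThetaAt j h t <-> exists a, gA G h j a /\ a t.
Proof. by move=> Hh; rewrite (ThetaAt_capActs t Hh.1.1); exact: actions_cover. Qed.

Lemma ThetaAt_move g q j a t : gHbar G (rcons g q) -> ThetaAt j (rcons g q) t ->
  gP G g j -> gA G g j a -> a t -> q j = Some a.
Proof.
move=> Tq; have [NT Hav] := tree_rcons Tq.
move=> + Hg Ga Ha; have [b [Eb Gb]] := (Hav j).1 Hg.
rewrite ThetaAt_rcons Eb => Hb; congr Some; apply: NNPP => Nba.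
exact: actions_disjoint (conj NT Hg) _ _ Gb Ga Nba t Hb Ha.
Qed.

Lemma ThetaH_successor_unique g p q th :
  gHbar G (rcons g p) -> gHbar G (rcons g q) ->
  ThetaH (rcons g p) th -> ThetaH (rcons g q) th -> p = q.
Proof.
move=> Tp Tq Hp Hq; have [_ Havp] := tree_rcons Tp; have [_ Havq] := tree_rcons Tq.
apply: functional_extensionality_dep => j.
case: (classic (gP G g j)) => Hg; last by rewrite (Havp j).2 // (Havq j).2.
have [a [Ea Ga]] := (Havp j).1 Hg.
have Ha : a (th j) by move: (Hp j); rewrite ThetaAt_rcons Ea.
by rewrite Ea (ThetaAt_move Tq (Hq j) Hg Ga Ha).
Qed.

Lemma ThetaH_comparable h1 h2 th : gHbar G h1 -> gHbar G h2 ->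
  ThetaH h1 th -> ThetaH h2 th -> Defs.prefix h1 h2 \/ Defs.prefix h2 h1.
Proof.
suff gen c : gHbar G (c ++ h1) -> gHbar G (c ++ h2) ->
    ThetaH (c ++ h1) th -> ThetaH (c ++ h2) th ->
    Defs.prefix (c ++ h1) (c ++ h2) \/ Defs.prefix (c ++ h2) (c ++ h1).
  exact: (gen [::]).
elim: h1 h2 c => [|p r1 IH] [|q r2] c T1 T2 H1 H2.
- by left; exact: prefix_refl.
- by left; exists (q :: r2); rewrite cats0.
- by right; exists (p :: r1); rewrite cats0.
have Pp : Defs.prefix (rcons c p) (c ++ p :: r1) by exists r1; rewrite cat_rcons.
have Pq : Defs.prefix (rcons c q) (c ++ q :: r2) by exists r2; rewrite cat_rcons.
have Epq : p = q.
  exact: ThetaH_successor_unique (tree_prefix_closed T1 Pp) (tree_prefix_closed T2 Pq)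
    (ThetaH_prefix T1 Pp H1) (ThetaH_prefix T2 Pq H2).
rewrite -Epq -!cat_rcons in T2 H2 *; rewrite -cat_rcons in T1 H1.
exact: IH.
Qed.

Lemma ThetaH_step g th : nonterminal G g -> ThetaH g th ->
  exists q, gHbar G (rcons g q) /\ ThetaH (rcons g q) th.
Proof.
move=> NT Hth.
have move_j j : exists o : option (action Theta j),
    (gP G g j -> exists a, o = Some a /\ gA G g j a /\ a (th j)) /\
    (~ gP G g j -> o = None).
  case: (classic (gP G g j)) => Hg; last by exists None.
  have [a [Ga Ha]] := proj1 (ThetaAt_actions _ (conj NT Hg)) (Hth j).
  by exists (Some a); split=> // _; exists a.
have [q Hq] := ChoiceFacts.non_dep_dep_functional_choice functional_choice _ _ move_j.
have Hav : available_profile G g q.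
  move=> j; have [Hact Hidle] := Hq j; split=> // Hg.
  by have [a [-> [Ga _]]] := Hact Hg; exists a.
exists q; split; first exact/(tree_successors NT).
move=> j; rewrite ThetaAt_rcons; have [Hact Hidle] := Hq j.
case: (classic (gP G g j)) => Hg; last by rewrite Hidle.
by have [a [-> [_ Ha]]] := Hact Hg.
Qed.

Hypothesis types_inhabited : forall j, inhabited (Theta j).

Lemma ThetaAt_nonempty j h : gHbar G h -> exists t, ThetaAt j h t.
Proof.
elim/last_ind: h => [|h p IH] Th; first by have [t] := types_inhabited j; exists t.
have [NT Hav] := tree_rcons Th.
rewrite ThetaAt_rcons; case E: (p j) => [a|]; last exact: IH (tree_rcons_closed Th).
by have [Hg Ga] := available_Some Hav E; exact: actions_nonempty (conj NT Hg) _ Ga.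
Qed.

Lemma ThetaH_nonempty h : gHbar G h -> exists th, ThetaH h th.
Proof.
move=> Th; have [th Hth] := ChoiceFacts.non_dep_dep_functional_choice
  functional_choice _ _ (fun j => ThetaAt_nonempty j Th).
by exists th.
Qed.

Variable L : nat.
Hypothesis finite_length : forall h, gHbar G h -> size h <= L.

Lemma play_reaches_Hi_or_terminal i g th : gHbar G g -> ThetaH g th -> exists h,
  [/\ Defs.prefix g h, gHbar G h, ThetaH h th, Hi_or_terminal i h & idle i g h].
Proof.
have [n] := ubnP (L - size g); elim: n g => // n IH g Hn Tg Hg.
case: (classic (Hi_or_terminal i g)) => Sg.
  by exists g; split=> //; [exact: prefix_refl | exact: idle_refl].
have NT : nonterminal G g by split=> // Tm; apply: Sg; right.
have [q [Tq Hq]] := ThetaH_step NT Hg.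
have Hn' : L - size (rcons g q) < n.
  by have := finite_length Tq; rewrite size_rcons; lia.
have [h [P Th Hh Sh Idle]] := IH _ Hn' Tq Hq.
exists h; split=> //; first exact: prefix_trans (prefix_rcons g q) P.
by apply: idle_rcons P Idle => Hgi; apply: Sg; left.
Qed.

Section InformationSets.
Variables (i : N) (Zi : hfamily Theta).
Hypothesis info_partition : hpartition (gInfo G i) (Hi G i).
Hypothesis terminal_partition : hpartition Zi (terminal G).
Hypothesis recall : perfect_recall i (ext_family G i Zi).

Local Notation F := (ext_family G i Zi).

Lemma info_Hi B h : gInfo G i B -> B h -> Hi G i h.
Proof. by move=> GB Bh; exact: info_partition.2.1 _ GB _ Bh. Qed.

Lemma ext_family_Hi_or_terminal B h : F B -> B h -> Hi_or_terminal i h.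
Proof.
case=> FB Bh; first by left; exact: info_Hi FB Bh.
by right; exact: terminal_partition.2.1 FB _ Bh.
Qed.

Lemma ext_family_tree B h : F B -> B h -> gHbar G h.
Proof. by move=> FB /(ext_family_Hi_or_terminal FB) [[[]]|[]]. Qed.

Lemma ext_family_nonempty B : F B -> exists h, B h.
Proof. by case=> FB; [exact: info_partition.1 | exact: terminal_partition.1]. Qed.

Lemma ext_family_cover h : Hi_or_terminal i h -> exists B, F B /\ B h.
Proof.
case=> Sh.
- by have [B [FB Bh]] := info_partition.2.2.1 h Sh; exists B; split=> //; left.
- by have [B [FB Bh]] := terminal_partition.2.2.1 h Sh; exists B; split=> //; right.
Qed.

Lemma ext_family_eq B1 B2 h : F B1 -> F B2 -> B1 h -> B2 h -> B1 = B2.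
Proof.
have NT B h' : gInfo G i B -> B h' -> ~ terminal G h'.
  by move=> GB Bh' Tm; have [[_ []]] := info_Hi GB Bh'.
case=> F1 [] F2 H1 H2.
- by apply: info_partition.2.2.2 => //; exists h.
- by case: (NT _ _ F1 H1); exact: terminal_partition.2.1 F2 _ H2.
- by case: (NT _ _ F2 H2); exact: terminal_partition.2.1 F1 _ H1.
- by apply: terminal_partition.2.2.2 => //; exists h.
Qed.

Lemma ext_family_acts B h h' : F B -> B h -> B h' -> acts i h = acts i h'.
Proof. by move=> FB Bh Bh'; case: (recall FB Bh Bh'). Qed.

Lemma ext_family_prefix_eq B h c :
  F B -> B h -> B c -> Hi G i h -> Defs.prefix h c -> h = c.
Proof.
move=> FB Bh Bc Hh Phc; apply: NNPP => Nhc.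
have := Hi_acts_lt Hh (ext_family_tree FB Bc) Phc Nhc.
by rewrite (ext_family_acts FB Bh Bc) ltnn.
Qed.

Lemma precB_below B C h :
  F B -> F C -> precB C B -> B h -> exists c, C c /\ Defs.prefix c h.
Proof.
move=> FB FC [c [hb [Cc [Bhb Pc]]]] Bh.
exact: (recall FB Bhb Bh).2 _ _ FC Cc Pc.
Qed.

Lemma precB_acts_lt Bu C h c : gInfo G i Bu -> F C -> C <> Bu -> precB Bu C ->
  Bu h -> C c -> size (acts i h) < size (acts i c).
Proof.
move=> GBu FC NC [hu [c0 [Hu [Cc0 P]]]] Buh Cc.
have Nc0 : hu <> c0 by move=> E; apply: NC; apply: ext_family_eq FC (or_introl GBu) Cc0 _; rewrite -E.
have := Hi_acts_lt (info_Hi GBu Hu) (ext_family_tree FC Cc0) P Nc0.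
by rewrite (ext_family_acts (or_introl GBu) Hu Buh) (ext_family_acts FC Cc0 Cc).
Qed.

Lemma isucc_incomparable Bu B1 B2 h1 h2 :
  isucc F Bu B1 -> isucc F Bu B2 -> B1 <> B2 -> B1 h1 -> B2 h2 ->
  ~ (Defs.prefix h1 h2 \/ Defs.prefix h2 h1).
Proof.
move=> I1 I2 N12 B1h B2h.
wlog P : B1 B2 h1 h2 I1 I2 N12 B1h B2h / Defs.prefix h1 h2.
  move=> W [P|P]; first exact: W I1 I2 N12 B1h B2h P (or_introl P).
  exact: W I2 I1 (nesym N12) B2h B1h P (or_introl P).
move=> _; case: I2 => _ [_ [_ []]]; exists B1.
by case: I1 => F1 [PuB1 [N1u _]]; do 4 split=> //; exists h1, h2.
Qed.

Lemma isucc_idle Bu B hu hb p : gInfo G i Bu -> isucc F Bu B -> Bu hu -> B hb ->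
  Defs.prefix (rcons hu p) hb -> idle i (rcons hu p) hb.
Proof.
move=> GBu [FB [_ [_ NoC]]] Hu Bhb P c Pc Pcb Ncb Hc; apply: NoC.
have [C [FC Cc]] := ext_family_cover (or_introl Hc).
have Puc := prefix_trans (prefix_rcons hu p) Pc.
exists C; split=> //; split.
  move=> E; rewrite E in Cc.
  exact: rcons_prefix_neq Pc (ext_family_prefix_eq (or_introl GBu) Hu Cc (info_Hi GBu Hu) Puc).
split; first by move=> E; rewrite E in Cc; exact: Ncb (ext_family_prefix_eq FB Cc Bhb Hc Pcb).
by split; [exists hu, c | exists c, hb].
Qed.

Lemma isucc_of_idle Bu B h q h' : gInfo G i Bu -> Bu h -> F B -> B h' ->
  Defs.prefix (rcons h q) h' -> idle i (rcons h q) h' -> isucc F Bu B.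
Proof.
move=> GBu Buh FB Bh' P Idle.
have Phh' := prefix_trans (prefix_rcons h q) P.
split=> //; split; first by exists h, h'.
split.
  move=> E; rewrite E in Bh'.
  exact: rcons_prefix_neq P (ext_family_prefix_eq (or_introl GBu) Buh Bh' (info_Hi GBu Buh) Phh').
move=> [C [FC [NCu [NCB [PuC PCB]]]]].
have [c [Cc Pc]] := precB_below FB FC PCB Bh'.
have Nch' : c <> h' by move=> E; apply: NCB; apply: ext_family_eq FC FB Cc _; rewrite E.
have Hc : Hi G i c.
  case: (ext_family_Hi_or_terminal FC Cc) => // -[_ Tmax].
  by case: Nch'; symmetry; exact: Tmax (ext_family_tree FB Bh') Pc.
have Pch : Defs.prefix c h.
  have [Pqc|/prefix_rcons_inv [Ec|//]] := prefix_total P Pc.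
  - by case: (Idle _ Pqc Pc Nch' Hc).
  - by rewrite Ec in Pc Nch' Hc; case: (Idle _ (prefix_refl _) Pc Nch' Hc).
have := precB_acts_lt GBu FC NCu PuC Buh Cc.
by rewrite ltnNge size_acts_prefix.
Qed.

Lemma isucc_act_ThetaAt Bu a B h :
  gInfo G i Bu -> isucc_act i F Bu a B -> B h -> ThetaAt i h = a.
Proof.
move=> GBu [IB [hu [hb [p [Hu [Bhb [Ep P]]]]]]] Bh.
have FB := IB.1.
rewrite /ThetaAt (ext_family_acts FB Bh Bhb).
rewrite (idle_acts (ext_family_tree FB Bhb) P (isucc_idle GBu IB Hu Bhb P)).
by rewrite acts_rcons Ep last_rcons.
Qed.

Lemma isucc_reached Bu h th a : gInfo G i Bu -> Bu h -> ThetaH h th ->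
  gA G h i a -> a (th i) -> exists B h' p,
  [/\ isucc F Bu B, B h', ThetaH h' th, p i = Some a & Defs.prefix (rcons h p) h'].
Proof.
move=> GBu Buh Hh Ga Ha.
have [NT Hg] := info_Hi GBu Buh.
have [q [Tq Hq]] := ThetaH_step NT Hh.
have [h' [P _ Hh' Sh' Idle]] := play_reaches_Hi_or_terminal i Tq Hq.
have [B [FB Bh']] := ext_family_cover Sh'.
exists B, h', q; split=> //; first exact: isucc_of_idle GBu Buh FB Bh' P Idle.
exact: ThetaAt_move Tq (Hq i) Hg Ga Ha.
Qed.

Lemma ThetaB_nonempty B : F B -> exists th, ThetaB B th.
Proof.
move=> FB; have [h Bh] := ext_family_nonempty FB.
by have [th Hth] := ThetaH_nonempty (ext_family_tree FB Bh); exists th, h.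
Qed.

Lemma ThetaB_prec Bu B th : F Bu -> F B -> precB Bu B -> ThetaB B th -> ThetaB Bu th.
Proof.
move=> FBu FB PuB [h [Bh Hh]]; have [hu [Hu P]] := precB_below FB FBu PuB Bh.
by exists hu; split=> //; exact: ThetaH_prefix (ext_family_tree FB Bh) P Hh.
Qed.

Lemma ThetaB_minus_prec Bu B th' :
  F Bu -> F B -> precB Bu B -> ThetaB_minus i B th' -> ThetaB_minus i Bu th'.
Proof.
move=> FBu FB PuB [h [Bh Hh]]; have [hu [Hu P]] := precB_below FB FBu PuB Bh.
by exists hu; split=> // j hj; exact: ThetaAt_prefix (ext_family_tree FB Bh) P (Hh j hj).
Qed.

Lemma isucc_partition_ThetaB Bu :
  gInfo G i Bu -> family_partition (isucc F Bu) ThetaB (ThetaB Bu).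
Proof.
move=> GBu; split; [|split].
- by move=> B [FB _]; exact: ThetaB_nonempty.
- move=> B1 B2 I1 I2 N12 th [h1 [B1h H1]] [h2 [B2h H2]].
  apply: (isucc_incomparable I1 I2 N12 B1h B2h).
  exact: ThetaH_comparable (ext_family_tree I1.1 B1h) (ext_family_tree I2.1 B2h) H1 H2.
- move=> th; split.
  + move=> [h [Buh Hh]].
    have [a [Ga Ha]] := proj1 (ThetaAt_actions _ (info_Hi GBu Buh)) (Hh i).
    have [B [h' [_ [IB Bh' Hh' _ _]]]] := isucc_reached GBu Buh Hh Ga Ha.
    by exists B; split=> //; exists h'.
  + by move=> [B [[FB [PuB _]] HB]]; exact: ThetaB_prec (or_introl GBu) FB PuB HB.
Qed.

Lemma isucc_act_partition_ThetaB_minus Bu a :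
  gInfo G i Bu -> (forall h, Bu h -> gA G h i a) ->
  family_partition (isucc_act i F Bu a) (ThetaB_minus i) (ThetaB_minus i Bu).
Proof.
move=> GBu Ga; split; [|split].
- move=> B [[FB _] _]; have [th [h [Bh Hh]]] := ThetaB_nonempty FB.
  by exists (fun j _ => th j), h; split=> // j hj; exact: Hh.
- move=> B1 B2 I1 I2 N12 th' [h1 [B1h H1]] [h2 [B2h H2]].
  have [hu Hu] := ext_family_nonempty (or_introl GBu : F Bu).
  have [t Ht] := actions_nonempty (info_Hi GBu Hu) (Ga _ Hu).
  have [th [Ei Eth]] := tprofile_extend th' t.
  have glue B h : isucc_act i F Bu a B -> B h -> ThetaH_minus i h th' -> ThetaH h th.
    by move=> IB Bh Hh; apply: ThetaH_glue Eth Hh _; rewrite Ei (isucc_act_ThetaAt GBu IB Bh).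
  apply: (isucc_incomparable I1.1 I2.1 N12 B1h B2h).
  exact: ThetaH_comparable (ext_family_tree I1.1.1 B1h) (ext_family_tree I2.1.1 B2h)
    (glue _ _ I1 B1h H1) (glue _ _ I2 B2h H2).
- move=> th'; split.
  + move=> [h [Buh Hm]].
    have [t Ht] := actions_nonempty (info_Hi GBu Buh) (Ga _ Buh).
    have [th [Ei Eth]] := tprofile_extend th' t.
    have Hh : ThetaH h th.
      apply: ThetaH_glue Eth Hm _; rewrite Ei.
      by apply/(ThetaAt_actions _ (info_Hi GBu Buh)); exists a; split=> //; exact: Ga.
    have Ha : a (th i) by rewrite Ei.
    have [B [h' [p [IB Bh' Hh' Ep P]]]] := isucc_reached GBu Buh Hh (Ga _ Buh) Ha.
    exists B; split; first by split=> //; exists h, h', p.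
    by exists h'; split=> // j hj; rewrite -(Eth j hj); exact: Hh'.
  + by move=> [B [[[FB [PuB _]] _] HB]]; exact: ThetaB_minus_prec (or_introl GBu) FB PuB HB.
Qed.

End InformationSets.
End Mechanism.
End GameTree.

Theorem proposition2
  (N : finType) (Theta : N -> Type) (X : Type)
  (f : tprofile Theta -> X) (G : game_form Theta X) :
  (forall j, inhabited (Theta j)) ->
  is_gradual_mechanism G f ->
  forall (i : N) (Zi : hfamily Theta),
    hpartition Zi (terminal G) ->
    perfect_recall i (ext_family G i Zi) ->
    (forall Bu, gInfo G i Bu ->
       family_partition (isucc (ext_family G i Zi) Bu) ThetaB
         (ThetaB Bu)) /\
    (forall Bu, gInfo G i Bu -> forall a, (forall h, Bu h -> gA G h i a) ->
       family_partition (isucc_act i (ext_family G i Zi) Bu a)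
         (ThetaB_minus i) (ThetaB_minus i Bu)).
Proof.
move=> inhabited_types [[_ [closed [_ [[L bounded] [successors [info _]]]]]]
  [nonempty [partition _]]] i Zi terminal_part recall.
have disjoint i' h Hh := (partition i' h Hh).1.
have cover i' h Hh := (partition i' h Hh).2.
split=> [Bu GBu | Bu GBu a Ga].
- exact: (isucc_partition_ThetaB closed successors nonempty disjoint cover
    inhabited_types bounded (info i) terminal_part recall GBu).
- exact: (isucc_act_partition_ThetaB_minus closed successors nonempty disjoint cover
    inhabited_types bounded (info i) terminal_part recall GBu Ga).
Qed.
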